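(* Suppose $\rho=(\rho_i)_{i=1}^I \in C(\mathbb{R}_+,\mathbb{R}_+)^I$, and let $\psi_i(u):=\int_0^u \rho_i(u')du'$. Then $\rho \in \mathcal{D}_{\mathrm{density}}$ if and only if $\psi \in \mathcal{D}^2$.
   Context: Fix $I\in\mathbb{N}$. $\mathcal{C}=\{f\in C(\mathbb{R}_+,\mathbb{R}_+):f(0)=0,f\text{ non-decreasing}\}$, $\mathcal{C}^\uparrow=\{f\in\mathcal{C}:f\text{ strictly increasing},\lim_{u\to\infty}f(u)=\infty\}$, $\mathcal{C}^q=\{f\in\mathcal{C}:f^{\mathbb{R}}\in C^q(\mathbb{R},\mathbb{R})\}$ where $f^{\mathbb{R}}$ extends $f$ by $0$ on $(-\infty,0)$. For $\psi\in\mathcal{C}^I$, $\phi_i(u)=u-\sum_{j=1}^I2(i\wedge j)\psi_j(u)$. $\mathcal{D}=\{\psi\in\mathcal{C}^I:\phi_I\in\mathcal{C}^\uparrow,\sum_ii\sup_{u_1\neq u_2}\frac{\psi_i(u_1)-\psi_i(u_2)}{\phi_i(u_1)-\phi_i(u_2)}<\frac12\}$, $\mathcal{D}^2=\mathcal{D}\cap(\mathcal{C}^2)^I$. $\mathcal{C}^1(\mathbb{R}_+,\mathbb{R}_+)$: functions $f:\mathbb{R}_+\to\mathbb{R}_+$ whose extension by $0$ on $(-\infty,0)$ is $C^1$ on $\mathbb{R}$. $\mathcal{D}_{\mathrm{density}}$: the set of $\rho\in\mathcal{C}^1(\mathbb{R}_+,\mathbb{R}_+)^I$ with $\sum_{i=1}^I2i\rho_i(u)<1$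 for all $u\ge0$ and $\sum_{i=1}^Ii\sup_u\frac{\rho_i(u)}{1-\sum_{j=1}^I2(i\wedge j)\rho_j(u)}<\frac12$. *)

From HB Require Import structures.
From mathcomp Require Import all_boot all_order all_algebra.
From mathcomp Require Import all_classical all_reals all_analysis.
Set Implicit Arguments. Unset Strict Implicit. Unset Printing Implicit Defensive.
Import Order.TTheory GRing.Theory Num.Theory.
Import numFieldNormedType.Exports.
Local Open Scope classical_set_scope.
Local Open Scope ring_scope.

Section Defs.
Variable R : realType.

(* functions R_+ -> R are represented as R -> R; only values on [0,oo) matter *)
Definition Rplus : set R := [set x | 0 <= x].

Definition ext0 (f : R -> R) : R -> R := fun x => if x < 0 then 0 else f x.

Fixpoint Cq_R (q : nat) (g : R -> R) : Prop :=
  match q with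
  | 0%N => continuous g
  | q'.+1 => (forall x, derivable g x 1) /\ Cq_R q' (derive1 g)
  end.

Definition isC (f : R -> R) : Prop :=
  {within Rplus, continuous f} /\ (forall x, 0 <= x -> 0 <= f x) /\
  f 0 = 0 /\ (forall x y, 0 <= x -> x <= y -> f x <= f y).

Definition isCup (f : R -> R) : Prop :=
  isC f /\ (forall x y, 0 <= x -> x < y -> f x < f y) /\
  (f x @[x --> +oo] --> +oo).

Definition isCq (q : nat) (f : R -> R) : Prop := isC f /\ Cq_R q (ext0 f).

(* psi is indexed by i = 1..I (values of psi at other indices are irrelevant) *)
Definition phi (I : nat) (psi : nat -> R -> R) (i : nat) (u : R) : R :=
  u - \sum_(1 <= j < I.+1) 2 * (minn i j)%:R * psi j u.

Definition difquot_sup (I : nat) (psi : nat -> R -> R) (i : nat) : \bar R :=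
  ereal_sup [set y : \bar R | exists u1 u2, 0 <= u1 /\ 0 <= u2 /\ u1 != u2 /\
      y = ((psi i u1 - psi i u2) / (phi I psi i u1 - phi I psi i u2))%:E].

Definition inD (I : nat) (psi : nat -> R -> R) : Prop :=
  (forall i, (1 <= i <= I)%N -> isC (psi i)) /\
  isCup (phi I psi I) /\
  (\sum_(1 <= i < I.+1) (i%:R)%:E * difquot_sup I psi i < (1 / 2)%:E)%E.

Definition inD2 (I : nat) (psi : nat -> R -> R) : Prop :=
  inD I psi /\ (forall i, (1 <= i <= I)%N -> isCq 2 (psi i)).

(* C^1(R_+,R_+): values >= 0 on R_+ and the extension by 0 is C^1 on R *)
Definition isC1plus (f : R -> R) : Prop :=
  (forall x, 0 <= x -> 0 <= f x) /\ Cq_R 1 (ext0 f).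

Definition density_sup (I : nat) (rho : nat -> R -> R) (i : nat) : \bar R :=
  ereal_sup [set y : \bar R | exists u, 0 <= u /\
      y = (rho i u / (1 - \sum_(1 <= j < I.+1) 2 * (minn i j)%:R * rho j u))%:E].

Definition inDdensity (I : nat) (rho : nat -> R -> R) : Prop :=
  (forall i, (1 <= i <= I)%N -> isC1plus (rho i)) /\
  (forall u, 0 <= u -> \sum_(1 <= i < I.+1) 2 * i%:R * rho i u < 1) /\
  (\sum_(1 <= i < I.+1) (i%:R)%:E * density_sup I rho i < (1 / 2)%:E)%E.

End Defs.

From HB Require Import structures.
From mathcomp Require Import all_boot all_order all_algebra.
From mathcomp Require Import all_classical all_reals all_analysis.
From mathcomp Require Import lra.
Import Order.TTheory GRing.Theory Num.Theory.
Import numFieldNormedType.Exports.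
Local Open Scope classical_set_scope.
Local Open Scope ring_scope.
Set Implicit Arguments. Unset Strict Implicit. Unset Printing Implicit Defensive.

(* Write [D_i := 1 - sum_j 2 min(i,j) rho_j] ([dphi] below); when [psi_j' = rho_j] this
   is [phi_i'].  The sign of the derivative of [t phi_i - psi_i] shows that [rho_i <= t D_i]
   on R_+ iff every difference quotient of [psi_i] against [phi_i] is at most [t], so the
   two suprema in the definitions coincide as soon as [D_i > 0] and [phi_i] is strictly
   increasing.  Each direction gets this positivity from its own summability hypothesis:
   [rho_i <= t_i D_i] and [D_i <= 1] give [sum_i 2 i rho_i <= 2 sum_i i t_i < 1], i.e. [D_I]
   is bounded below by a positive constant, and strict monotonicity of [phi_I] passes to
   every [phi_i] because the [psi_j] are non-decreasing.  Regularity is the fundamental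
   theorem of calculus: [ext0 psi_i] has derivative [ext0 rho_i], the point 0 being handled
   by continuity of [ext0 rho_i] in one direction and of [(ext0 psi_i)'] in the other. *)

Section RealFunctions.
Variable R : realType.
Implicit Types (f g df : R -> R) (x y : R).

Lemma is_derive_ndecr f df x y :
  (forall z, is_derive z (1:R) f (df z)) -> (forall z, x < z < y -> 0 <= df z) ->
  x <= y -> f x <= f y.
Proof.
move=> fd df_ge0 xy.
apply: (@ger0_derive1_ndecr R f x y) => //.
- move=> z; rewrite in_itv /= => /df_ge0.
  by have := fd z => fdz; rewrite derive1E derive_val.
- exact: derivable_within_continuous.
Qed.

Lemma derive1_ge0_of_ndecr_right f x : derivable f x 1 ->
  (forall y, x <= y -> f x <= f y) -> 0 <= derive1 f x.
Proof.
move=> fx ndf; rewrite derive1E /derive (cvg_at_rightE _ _ fx).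
apply: limr_ge.
  by apply/cvg_ex; exists ('D_1 f x); exact: cvg_dnbhs_at_right fx.
near=> h; have h0 : 0 < h by near: h; exact: nbhs_right_gt.
rewrite /GRing.scale /= mulr1 pmulr_rge0 ?invr_gt0 // subr_ge0.
by apply: ndf; rewrite lerDr ltW.
Unshelve. all: by end_near. Qed.

Lemma cvg_at_right_unique f g x (a b : R) :
  f y @[y --> x^'+] --> a -> g y @[y --> x^'+] --> b ->
  (forall y, x < y -> f y = g y) -> a = b.
Proof.
move=> fa gb fg; have gx : f y @[y --> x^'+] --> b.
  apply: cvg_trans gb; apply: near_eq_cvg; near=> y; apply/esym/fg.
  by near: y; exact: nbhs_right_gt.
exact: cvg_unique fa gx.
Unshelve. all: by end_near. Qed.

Lemma is_derive_lower_slope f df c x y :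
  (forall z, is_derive z (1:R) f (df z)) -> (forall z, x < z < y -> c <= df z) ->
  x <= y -> f x + c * (y - x) <= f y.
Proof.
move=> fd df_ge xy.
have gd z : is_derive z (1:R) (f - c *: id) (df z - c *: 1).
  by have := fd z => fdz; exact: is_deriveB.
have gd_ge0 z : x < z < y -> 0 <= df z - c *: 1.
  by move=> /df_ge; rewrite -[c *: 1]/(c * 1) mulr1 subr_ge0.
have := is_derive_ndecr gd gd_ge0 xy.
rewrite !fctE -[c *: x]/(c * x) -[c *: y]/(c * y); lra.
Qed.

Lemma is_derive_sum_seq (s : seq nat) (c : nat -> R) (G : nat -> R -> R)
    (dG : nat -> R) x :
  (forall j, j \in s -> is_derive x (1:R) (G j) (dG j)) ->
  is_derive x (1:R) (fun y => \sum_(j <- s) c j * G j y) (\sum_(j <- s) c j * dG j).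
Proof.
elim: s => [_|a s IH Gd].
  have -> : (fun y => \sum_(j <- [::]) c j * G j y) = cst 0.
    by apply/funext => y; rewrite big_nil.
  by rewrite big_nil; exact: is_derive_cst.
have -> : (fun y => \sum_(j <- a :: s) c j * G j y) =
    (fun y => c a * G a y) + (fun y => \sum_(j <- s) c j * G j y).
  by apply/funext => y; rewrite big_cons.
rewrite big_cons; apply: is_deriveD.
  by have := Gd a (mem_head _ _) => Ga; exact: is_deriveZ.
by apply: IH => j js; apply: Gd; rewrite in_cons js orbT.
Qed.

Lemma derivable_continuous f : (forall x, derivable f x 1) -> continuous f.
Proof. by move=> fd x; apply: differentiable_continuous; exact/derivable1_diffP. Qed.

Lemma Cq_R_continuous q f : Cq_R q f -> continuous f.
Proof. by case: q => [//|q [fd _]]; exact: derivable_continuous. Qed.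

Lemma Cq_R_derive q f df : (forall x, is_derive x (1:R) f (df x)) ->
  Cq_R q.+1 f <-> Cq_R q df.
Proof.
move=> fd /=; have -> : derive1 f = df.
  by apply/funext => x; rewrite derive1E derive_val.
by split => [[]//|]; split.
Qed.

End RealFunctions.

Section ExtensionByZero.
Variable R : realType.
Implicit Types (f P : R -> R) (x : R).

Lemma ext0_ge0 f x : 0 <= x -> ext0 f x = f x.
Proof. by rewrite /ext0 ltNge => ->. Qed.

Lemma ext0_lt0 f x : x < 0 -> ext0 f x = 0.
Proof. by rewrite /ext0 => ->. Qed.

Lemma ext0_continuous0 f : {for 0, continuous (ext0 f)} -> f 0 = 0.
Proof.
move=> f0; have f0_left : ext0 f x @[x --> 0^'-] --> 0.
  by apply: cvg_near_cst; near=> x; apply: ext0_lt0; near: x; exact: nbhs_left_lt.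
by rewrite -(ext0_ge0 f (lexx 0)); exact: cvg_unique (cvg_at_left_filter f0) f0_left.
Unshelve. all: by end_near. Qed.

Lemma ext0_is_derive_lt0 P x : x < 0 -> is_derive x (1:R) (ext0 P) 0.
Proof.
move=> x0; apply: (near_eq_is_derive _ (is_derive_cst 0 x 1)).
by near=> y; rewrite ext0_lt0 //; near: y; exact: lt_nbhsl.
Unshelve. all: by end_near. Qed.

End ExtensionByZero.

Section IntegralFromZero.
Variable R : realType.
Notation mu := (@lebesgue_measure R).
Variables f P : R -> R.
Hypothesis f_cont : {within @Rplus R, continuous f}.
Hypothesis P_def : forall u, 0 <= u -> P u = Rintegral mu `[0, u] f.

Let f_cont_split : {in `]0, +oo[, continuous f} /\ f y @[y --> 0^'+] --> f 0.
Proof.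
apply/continuous_within_itvcyP; suff -> : [set` `[0, +oo[] = @Rplus R by [].
by apply/seteqP; split => x /=; rewrite in_itv /= andbT.
Qed.

Lemma ext0_integral_is_derive_gt0 (x : R) : 0 < x -> is_derive x (1:R) (ext0 P) (f x).
Proof.
move=> x0.
have f_int : mu.-integrable `[0, x + 1] (EFin \o f).
  apply: continuous_compact_integrable; first exact: segment_compact.
  by apply: continuous_subspaceW f_cont => y /=; rewrite in_itv /= => /andP[].
have fx : {for x, continuous f} by apply: f_cont_split.1; rewrite in_itv /= x0.
have x_lt : x < x + 1 by rewrite ltrDl.
have [Fx F'x] := continuous_FTC1_closed x_lt f_int x0 fx.
apply: near_eq_is_derive (DeriveDef Fx _); last by rewrite -derive1E.
near=> y; have y0 : 0 < y by near: y; exact: lt_nbhsr.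
by rewrite ext0_ge0 ?P_def // ltW.
Unshelve. all: by end_near. Qed.

Lemma ext0_integral_is_derive0_of_C1 : derivable (ext0 P) 0 1 ->
  {for 0, continuous (derive1 (ext0 P))} -> is_derive 0 (1:R) (ext0 P) (f 0).
Proof.
move=> P0 P'_cont; apply: DeriveDef; first exact: P0.
rewrite -derive1E.
apply: cvg_at_right_unique (cvg_at_right_filter P'_cont) f_cont_split.2 _.
move=> y y0; have := ext0_integral_is_derive_gt0 y0 => P'y.
by have := derive1E (ext0 P) y; rewrite derive_val.
Qed.

Lemma ext0_integral_is_derive0 : continuous (ext0 f) -> is_derive 0 (1:R) (ext0 P) (f 0).
Proof.
move=> r_cont; set r := ext0 f in r_cont *.
have r_le0 t : t <= 0 -> r t = 0.
  rewrite le_eqVlt => /predU1P[->|t0]; last exact: ext0_lt0.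
  by rewrite /r ext0_ge0 // (ext0_continuous0 (r_cont 0)).
have r_int a b : mu.-integrable `[a, b] (EFin \o r).
  apply: continuous_compact_integrable; first exact: segment_compact.
  exact: continuous_subspaceT.
have m10 : (-1 : R) < 0 by rewrite ltrN10.
(* [F] integrates [ext0 f] from [-1], hence agrees with [ext0 P] near [0]. *)
have [F0 F'0] := continuous_FTC1_closed ltr01 (r_int _ _) m10 (r_cont 0).
set F := (fun x : R => _) in F0 F'0.
have F_ext0P : \forall y \near 0, F y = ext0 P y.
  near=> y; have ym : -1 < y by near: y; exact: lt_nbhsr.
  case: (ltP y 0) => y0.
  - rewrite ext0_lt0 // /F (@eq_Rintegral _ _ _ mu _ (cst 0)) ?Rintegral_cst ?mul0r //.
    move=> t; rewrite inE /= in_itv /= => /andP[_ ty]; apply: r_le0.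
    exact: le_trans ty (ltW y0).
  - have := @Rintegral_itvB _ r (BLeft (-1)) (BRight y) 0 (r_int _ _).
    rewrite !bnd_simp (ltW m10) y0 => /(_ isT isT).
    rewrite (@eq_Rintegral _ _ _ mu `[-1, 0] (cst 0)); last first.
      by move=> t; rewrite inE /= in_itv /= => /andP[_]; exact: r_le0.
    rewrite Rintegral_cst // mul0r subr0 /F => ->; rewrite Rintegral_itv_obnd_cbnd; last first.
      by apply: integrableS (r_int 0 y) => //; exact: subset_itv_oc_cc.
    rewrite ext0_ge0 // P_def //; apply: eq_Rintegral => t.
    by rewrite inE /= in_itv /= => /andP[t0 _]; rewrite /r ext0_ge0.
apply: near_eq_is_derive (DeriveDef F0 _) => //.
by rewrite -derive1E F'0 /r ext0_ge0.
Unshelve. all: by end_near. Qed.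

Lemma ext0_integral_is_derive : is_derive 0 (1:R) (ext0 P) (f 0) ->
  forall x, is_derive x (1:R) (ext0 P) (ext0 f x).
Proof.
move=> P'0 x; case: (ltgtP x 0) => [x0|x0|->].
- by rewrite ext0_lt0 //; exact: ext0_is_derive_lt0.
- by rewrite ext0_ge0 ?ltW //; exact: ext0_integral_is_derive_gt0.
- by rewrite ext0_ge0.
Qed.

End IntegralFromZero.

Section FunctionClasses.
Variable R : realType.
Implicit Types (f g : R -> R).

Lemma within_Rplus_continuous f g : continuous g ->
  (forall x, 0 <= x -> f x = g x) -> {within @Rplus R, continuous f}.
Proof.
move=> g_cont fg; apply: (@subspace_eq_continuous _ _ _ g).
  by move=> x; rewrite inE => /fg.
exact: continuous_subspaceT.
Qed.

Lemma isC_of_ndecr f : {within @Rplus R, continuous f} -> f 0 = 0 ->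
  (forall x y, 0 <= x -> x <= y -> f x <= f y) -> isC f.
Proof. by move=> f_cont f0 f_nd; split=> //; split=> [x x0|]; [rewrite -f0 f_nd|]. Qed.

Lemma isCup_of_slope f (c : R) : {within @Rplus R, continuous f} -> f 0 = 0 -> 0 < c ->
  (forall x y, 0 <= x -> x <= y -> f x + c * (y - x) <= f y) -> isCup f.
Proof.
move=> f_cont f0 c0 slope.
have f_lt x y : 0 <= x -> x < y -> f x < f y.
  move=> x0 xy; have := slope x y x0 (ltW xy).
  have : 0 < c * (y - x) by rewrite mulr_gt0 // subr_gt0.
  lra.
split; [apply: isC_of_ndecr => // x y x0|split => //].
  by rewrite le_eqVlt => /predU1P[->//|/(f_lt _ _ x0)/ltW].
apply/cvgryPge => A; near=> x.
have x0 : 0 <= x by near: x; apply: nbhs_pinfty_ge; rewrite num_real.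
have xA : A / c <= x by near: x; apply: nbhs_pinfty_ge; rewrite num_real.
have := slope 0 x (lexx 0) x0; rewrite f0 subr0 add0r.
have : A <= c * x by rewrite mulrC -ler_pdivrMr.
lra.
Unshelve. all: by end_near. Qed.

End FunctionClasses.

Section Coefficients.
Variables (R : realType) (I : nat).
Implicit Types (rho psi : nat -> R -> R) (w : nat -> R).

Definition dphi rho (i : nat) (u : R) : R :=
  1 - \sum_(1 <= j < I.+1) 2 * (minn i j)%:R * rho j u.

Lemma dphiI rho u : dphi rho I u = 1 - \sum_(1 <= j < I.+1) 2 * j%:R * rho j u.
Proof.
congr (_ - _); apply: eq_big_nat => j; rewrite ltnS => /andP[_ jI].
by rewrite (minn_idPr jI).
Qed.

Lemma sum_minn_le w i : (forall j, (1 <= j <= I)%N -> 0 <= w j) -> (i <= I)%N ->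
  \sum_(1 <= j < I.+1) 2 * (minn i j)%:R * w j <=
  \sum_(1 <= j < I.+1) 2 * (minn I j)%:R * w j.
Proof.
move=> w_ge0 iI; apply: ler_sum_nat => j; rewrite ltnS => jI.
apply: ler_wpM2r; first exact: w_ge0.
by rewrite ler_pM2l // ler_nat leq_min geq_minr (leq_trans (geq_minl _ _)).
Qed.

Lemma dphiI_le rho i u : (forall j, (1 <= j <= I)%N -> 0 <= rho j u) -> (i <= I)%N ->
  dphi rho I u <= dphi rho i u.
Proof. by move=> rho_ge0 iI; rewrite lerB // sum_minn_le. Qed.

Lemma dphi_le1 rho i u : (forall j, (1 <= j <= I)%N -> 0 <= rho j u) -> dphi rho i u <= 1.
Proof.
move=> rho_ge0; rewrite lerBlDr lerDl big_nat_cond.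
by apply: sumr_ge0 => j /andP[/andP[j1 jI] _]; rewrite mulr_ge0 // rho_ge0 // j1 -ltnS.
Qed.

Lemma phiI_increment_le psi i x y : (forall j, (1 <= j <= I)%N -> psi j x <= psi j y) ->
  (i <= I)%N -> phi I psi I y - phi I psi I x <= phi I psi i y - phi I psi i x.
Proof.
move=> psi_nd iI.
have w_ge0 j : (1 <= j <= I)%N -> 0 <= psi j y - psi j x by move/psi_nd; rewrite subr_ge0.
have := sum_minn_le w_ge0 iI.
by rewrite !(eq_bigr _ (fun j _ => mulrBr _ _ _)) !sumrB /phi => ?; lra.
Qed.

Lemma sum_density_le rho (t : nat -> R) u :
  (forall j, (1 <= j <= I)%N -> 0 <= rho j u) -> (forall j, (1 <= j <= I)%N -> 0 <= t j) ->
  (forall j, (1 <= j <= I)%N -> rho j u <= t j * dphi rho j u) ->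
  \sum_(1 <= j < I.+1) 2 * j%:R * rho j u <= 2 * \sum_(1 <= j < I.+1) j%:R * t j.
Proof.
move=> rho_ge0 t_ge0 rho_le; rewrite mulr_sumr; apply: ler_sum_nat => j; rewrite ltnS => jI.
rewrite -mulrA ler_pM2l // ler_wpM2l //.
by rewrite (le_trans (rho_le j jI)) // ler_piMr ?t_ge0 // dphi_le1.
Qed.

Lemma dphi_gt0 rho i u : (forall j, (1 <= j <= I)%N -> 0 <= rho j u) ->
  \sum_(1 <= j < I.+1) 2 * j%:R * rho j u < 1 -> (i <= I)%N -> 0 < dphi rho i u.
Proof.
move=> rho_ge0 sum_lt1 iI; apply: lt_le_trans (dphiI_le rho_ge0 iI).
by rewrite dphiI subr_gt0.
Qed.

End Coefficients.

Section PhiDerivative.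
Variables (R : realType) (I : nat).
Implicit Types (rho psi : nat -> R -> R).

Lemma is_derive_phi psi rho i (x : R) :
  (forall j, (1 <= j <= I)%N -> is_derive x (1:R) (psi j) (rho j x)) ->
  is_derive x (1:R) (phi I psi i) (dphi I rho i x).
Proof.
move=> psi_d.
have sum_d : is_derive x (1:R) (fun y => \sum_(1 <= j < I.+1) 2 * (minn i j)%:R * psi j y)
    (\sum_(1 <= j < I.+1) 2 * (minn i j)%:R * rho j x).
  by apply: is_derive_sum_seq => j; rewrite mem_index_iota ltnS; exact: psi_d.
exact: is_deriveB (is_derive_id x 1) sum_d.
Qed.

Lemma phi_ext0 psi i (x : R) : 0 <= x -> phi I (fun j => ext0 (psi j)) i x = phi I psi i x.
Proof. by move=> x0; rewrite /phi; under eq_bigr do rewrite ext0_ge0 //. Qed.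

Lemma dphi_ext0 rho i (x : R) : 0 <= x -> dphi I (fun j => ext0 (rho j)) i x = dphi I rho i x.
Proof. by move=> x0; rewrite /dphi; under eq_bigr do rewrite ext0_ge0 //. Qed.

End PhiDerivative.

Section ExtendedReals.
Variable R : realType.
Local Open Scope ereal_scope.

Lemma ereal_le_fin_ub (x y : \bar R) : (forall t : R, y <= t%:E -> x <= t%:E) -> x <= y.
Proof.
case: y => [t| |] ub; [exact: ub | exact: leey |].
by rewrite (eq_ninfty (fun t => ub t (leNye _))).
Qed.

Lemma sum_weighted_fin (I : nat) (s : nat -> \bar R) (a : R) :
  (forall i, (1 <= i <= I)%N -> 0 <= s i) ->
  \sum_(1 <= i < I.+1) (i%:R)%:E * s i < a%:E ->
  exists2 t : nat -> R, (forall i, (1 <= i <= I)%N -> s i = (t i)%:E) &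
    (\sum_(1 <= i < I.+1) i%:R * t i < a)%R.
Proof.
move=> s_ge0 s_sum.
have s_fin i : (1 <= i <= I)%N -> s i = (fine (s i))%:E.
  move=> iI; have : (i%:R)%:E * s i <= \sum_(1 <= j < I.+1) (j%:R)%:E * s j.
    rewrite (bigD1_seq i) ?mem_index_iota ?ltnS ?iota_uniq //= leeDl //.
    rewrite big_seq_cond; apply: sume_ge0 => j /andP[+ _].
    by rewrite mem_index_iota ltnS => jI; rewrite mule_ge0 ?lee_fin ?s_ge0.
  move: (s_ge0 i iI); case: (s i) => [r| |] //= _.
  rewrite gt0_muley ?lte_fin ?ltr0n; last by case/andP: iI.
  by move/le_lt_trans/(_ s_sum); rewrite ltNge leey.
exists (fun i => fine (s i)) => //.
rewrite -lte_fin -sumEFin (eq_big_nat _ _ (F2 := fun i => (i%:R)%:E * s i)) //.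
by move=> i iI; rewrite EFinM -s_fin.
Qed.

End ExtendedReals.

Section SupremumBounds.
Variables (R : realType) (I : nat).
Implicit Types (rho psi : nat -> R -> R) (t : R).

Lemma density_sup_leP rho i t : (forall u, 0 <= u -> 0 < dphi I rho i u) ->
  (density_sup I rho i <= t%:E)%E <-> (forall u, 0 <= u -> rho i u <= t * dphi I rho i u).
Proof.
move=> dphi_gt0; split => [sup_le u u0 | rho_le].
  rewrite -ler_pdivrMr ?dphi_gt0 // -lee_fin; apply: le_trans sup_le.
  by apply: ereal_sup_ubound; exists u.
apply: ub_ereal_sup => _ [u [u0 ->]].
by rewrite lee_fin ler_pdivrMr ?dphi_gt0 ?rho_le.
Qed.

Lemma difquot_sup_leP psi i t :
  (forall x y, 0 <= x -> x < y -> 0 < phi I psi i y - phi I psi i x) ->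
  (difquot_sup I psi i <= t%:E)%E <->
  (forall x y, 0 <= x -> x < y -> psi i y - psi i x <= t * (phi I psi i y - phi I psi i x)).
Proof.
move=> phi_gt0; split => [sup_le x y x0 xy | psi_le].
  rewrite -ler_pdivrMr ?phi_gt0 // -lee_fin; apply: le_trans sup_le.
  apply: ereal_sup_ubound; exists y, x.
  by split; [exact: le_trans x0 (ltW xy) | rewrite gt_eqF].
apply: ub_ereal_sup => _ [u1 [u2 [u10 [u20 [+ ->]]]]]; rewrite lee_fin neq_lt.
case/orP=> [u12|u21]; last by rewrite ler_pdivrMr ?phi_gt0 ?psi_le.
rewrite -opprB -[phi _ _ _ u1 - _]opprB invrN mulrNN.
by rewrite ler_pdivrMr ?phi_gt0 ?psi_le.
Qed.

Lemma density_sup_ge0 rho i : 0 <= rho i 0 -> 0 < dphi I rho i 0 ->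
  (0 <= density_sup I rho i)%E.
Proof.
move=> rho0 dphi0; apply: le_trans (ereal_sup_ubound _); last by exists 0.
by rewrite lee_fin divr_ge0 ?(ltW dphi0).
Qed.

Lemma difquot_sup_ge0 psi i : psi i 0 <= psi i 1 ->
  0 < phi I psi i 1 - phi I psi i 0 -> (0 <= difquot_sup I psi i)%E.
Proof.
move=> psi01 phi01; apply: le_trans (ereal_sup_ubound _); last first.
  by exists 1, 0; split; [|split; [|split; [exact: oner_neq0|]]].
by rewrite lee_fin; apply: divr_ge0; [rewrite subr_ge0 | exact: ltW].
Qed.

End SupremumBounds.

Section DensityAndPrimitive.
Variables (R : realType) (I : nat) (rho psi : nat -> R -> R).
Hypothesis rho_ge0 : forall i, (1 <= i <= I)%N -> forall u, 0 <= u -> 0 <= rho i u.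
Hypothesis psi0 : forall i, (1 <= i <= I)%N -> psi i 0 = 0.
Hypothesis psi_is_derive : forall i, (1 <= i <= I)%N ->
  forall x, is_derive x (1:R) (ext0 (psi i)) (ext0 (rho i) x).

Local Notation Psi := (fun j => ext0 (psi j)).
Local Notation r := (fun j => ext0 (rho j)).

Lemma psi_ndecr i : (1 <= i <= I)%N ->
  forall x y, 0 <= x -> x <= y -> psi i x <= psi i y.
Proof.
move=> iI x y x0 xy; rewrite -(ext0_ge0 _ x0) -(ext0_ge0 _ (le_trans x0 xy)).
apply: (is_derive_ndecr (psi_is_derive iI)) xy => z /andP[xz _].
have z0 : 0 <= z by rewrite (le_trans x0) ?ltW.
by rewrite ext0_ge0 // rho_ge0.
Qed.

Lemma psi_isC i : (1 <= i <= I)%N -> isC (psi i).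
Proof.
move=> iI; apply: isC_of_ndecr; [|exact: psi0|exact: psi_ndecr].
apply: (@within_Rplus_continuous _ _ (Psi i)); last by move=> x /ext0_ge0.
by apply: derivable_continuous => x; have := psi_is_derive iI x => ?.
Qed.

Lemma psi_isCq2 i : (1 <= i <= I)%N -> isCq 2 (psi i) <-> Cq_R 1 (r i).
Proof.
move=> iI; rewrite /isCq (Cq_R_derive _ (psi_is_derive iI)).
by split => [[]//|]; split => //; exact: psi_isC.
Qed.

Lemma is_derive_phi_ext0 i x : is_derive x (1:R) (phi I Psi i) (dphi I r i x).
Proof. by apply: is_derive_phi => j jI; exact: psi_is_derive. Qed.

Lemma density_le_iff_increment_le i t : (1 <= i <= I)%N ->
  (forall u, 0 <= u -> rho i u <= t * dphi I rho i u) <->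
  (forall x y, 0 <= x -> x < y -> psi i y - psi i x <= t * (phi I psi i y - phi I psi i x)).
Proof.
move=> iI; set K := t *: phi I Psi i - Psi i.
have K_d x : is_derive x (1:R) K (t *: dphi I r i x - r i x).
  by have := is_derive_phi_ext0 i x => ?; have := psi_is_derive iI x => ?; exact: is_deriveB.
have KE x : 0 <= x -> K x = t * phi I psi i x - psi i x.
  by move=> x0; rewrite /K !fctE phi_ext0 // ext0_ge0.
have K'E x : 0 <= x -> t *: dphi I r i x - r i x = t * dphi I rho i x - rho i x.
  by move=> x0; rewrite dphi_ext0 // ext0_ge0.
split => [rho_le x y x0 xy | psi_le u u0].
  have := is_derive_ndecr K_d _ (ltW xy); rewrite !KE ?(le_trans x0 (ltW xy)) //.
  move=> /(_ _) K_nd; suff : t * phi I psi i x - psi i x <= t * phi I psi i y - psi i y by lra.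
  apply: K_nd => z /andP[xz _]; have z0 : 0 <= z by rewrite (le_trans x0) ?ltW.
  by rewrite K'E // subr_ge0 rho_le.
have : 0 <= derive1 K u.
  apply: derive1_ge0_of_ndecr_right => // y; rewrite le_eqVlt => /predU1P[->//|uy].
  by rewrite !KE ?(le_trans u0 (ltW uy)) //; have := psi_le u y u0 uy; lra.
by rewrite derive1E derive_val K'E //; lra.
Qed.

Lemma phi0 i : phi I psi i 0 = 0.
Proof.
rewrite /phi big_nat_cond big1 ?subr0 // => j /andP[jI _].
by rewrite psi0 ?mulr0 // -ltnS.
Qed.

Lemma phi_within_continuous i : {within @Rplus R, continuous (phi I psi i)}.
Proof.
apply: (@within_Rplus_continuous _ _ (phi I Psi i)); last by move=> x x0; rewrite phi_ext0.
by apply: derivable_continuous => x; have := is_derive_phi_ext0 i x => ?.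
Qed.

Lemma phi_lower_slope i c : (forall u, 0 <= u -> c <= dphi I rho i u) ->
  forall x y, 0 <= x -> x <= y -> phi I psi i x + c * (y - x) <= phi I psi i y.
Proof.
move=> dphi_ge x y x0 xy.
rewrite -[phi I psi i x]phi_ext0 // -[phi I psi i y]phi_ext0 ?(le_trans x0 xy) //.
apply: is_derive_lower_slope xy => [z|z /andP[xz _]]; first exact: is_derive_phi_ext0.
by rewrite dphi_ext0 ?dphi_ge // (le_trans x0) ?ltW.
Qed.

Lemma phi_increment_gt0 i : (i <= I)%N ->
  (forall x y, 0 <= x -> x < y -> phi I psi I x < phi I psi I y) ->
  forall x y, 0 <= x -> x < y -> 0 < phi I psi i y - phi I psi i x.
Proof.
move=> iI phiI_lt x y x0 xy; apply: lt_le_trans (phiI_increment_le _ iI).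
  by rewrite subr_gt0 phiI_lt.
by move=> j jI; rewrite psi_ndecr // ltW.
Qed.

Lemma density_sup_eq_difquot_sup i : (1 <= i <= I)%N ->
  (forall u, 0 <= u -> 0 < dphi I rho i u) ->
  (forall x y, 0 <= x -> x < y -> 0 < phi I psi i y - phi I psi i x) ->
  density_sup I rho i = difquot_sup I psi i.
Proof.
move=> iI dphi_gt0 phi_gt0; apply/le_anti/andP; split; apply: ereal_le_fin_ub => t.
  by move=> /(difquot_sup_leP t phi_gt0)/(density_le_iff_increment_le t iI)
    /(density_sup_leP t dphi_gt0).
by move=> /(density_sup_leP t dphi_gt0)/(density_le_iff_increment_le t iI)
  /(difquot_sup_leP t phi_gt0).
Qed.

Lemma inD2_of_inDdensity : inDdensity I rho -> inD2 I psi.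
Proof.
case=> rho_C1 [rho_sum_lt1 sup_sum].
have dphi_gt0 i : (i <= I)%N -> forall u, 0 <= u -> 0 < dphi I rho i u.
  by move=> iI u u0; rewrite dphi_gt0 ?rho_sum_lt1 // => j jI; exact: rho_ge0.
have sup_ge0 i : (1 <= i <= I)%N -> (0 <= density_sup I rho i)%E.
  by move=> iI; rewrite density_sup_ge0 ?rho_ge0 ?dphi_gt0 //; case/andP: iI.
have [t sup_t t_sum] := sum_weighted_fin sup_ge0 sup_sum.
have t_ge0 i : (1 <= i <= I)%N -> 0 <= t i by move=> iI; rewrite -lee_fin -sup_t ?sup_ge0.
have rho_le i : (1 <= i <= I)%N -> forall u, 0 <= u -> rho i u <= t i * dphi I rho i u.
  move=> iI; have /andP[_ iI'] := iI.
  by apply/(density_sup_leP _ (dphi_gt0 i iI')); rewrite sup_t.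
pose c := 1 - 2 * \sum_(1 <= i < I.+1) i%:R * t i.
have c_gt0 : 0 < c by rewrite /c; lra.
have dphiI_ge u : 0 <= u -> c <= dphi I rho I u.
  move=> u0; have := sum_density_le (fun j jI => rho_ge0 jI u0) t_ge0
    (fun j jI => rho_le j jI u u0).
  by rewrite dphiI /c; lra.
have phiI_up : isCup (phi I psi I).
  apply: (isCup_of_slope (@phi_within_continuous I) (phi0 I) c_gt0) => x y.
  exact: phi_lower_slope.
split; last by move=> i iI; apply/psi_isCq2 => //; exact: (rho_C1 i iI).2.
split; [exact: psi_isC | split => //].
rewrite (eq_big_nat _ _ (F2 := fun i => ((i%:R)%:E * density_sup I rho i)%E)) // => i iI.
have /andP[_ iI'] := iI.
by rewrite density_sup_eq_difquot_sup //; [exact: dphi_gt0 | exact: phi_increment_gt0 phiI_up.2.1].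
Qed.

Lemma inDdensity_of_inD2 : inD2 I psi -> inDdensity I rho.
Proof.
case=> -[_ [phiI_up sup_sum]] psi_C2.
have phi_gt0 i : (i <= I)%N -> forall x y, 0 <= x -> x < y ->
    0 < phi I psi i y - phi I psi i x.
  by move=> iI; exact: phi_increment_gt0 phiI_up.2.1.
have sup_ge0 i : (1 <= i <= I)%N -> (0 <= difquot_sup I psi i)%E.
  move=> /andP[i1 iI]; rewrite difquot_sup_ge0 ?phi_gt0 ?ltr01 //.
  by rewrite psi_ndecr ?ler01 ?i1.
have [t sup_t t_sum] := sum_weighted_fin sup_ge0 sup_sum.
have t_ge0 i : (1 <= i <= I)%N -> 0 <= t i by move=> iI; rewrite -lee_fin -sup_t ?sup_ge0.
have rho_le i : (1 <= i <= I)%N -> forall u, 0 <= u -> rho i u <= t i * dphi I rho i u.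
  move=> iI; have /andP[_ iI'] := iI; apply/(density_le_iff_increment_le _ iI).
  by apply/(difquot_sup_leP _ (phi_gt0 i iI')); rewrite sup_t.
have rho_sum_lt1 u : 0 <= u -> \sum_(1 <= i < I.+1) 2 * i%:R * rho i u < 1.
  move=> u0; apply: le_lt_trans (sum_density_le _ t_ge0 (fun j jI => rho_le j jI u u0)) _.
    by move=> j jI; exact: rho_ge0.
  lra.
have dphi_gt0 i : (i <= I)%N -> forall u, 0 <= u -> 0 < dphi I rho i u.
  by move=> iI u u0; rewrite dphi_gt0 ?rho_sum_lt1 // => j jI; exact: rho_ge0.
split; first by move=> i iI; split; [exact: rho_ge0 | apply/psi_isCq2/psi_C2].
split => //.
rewrite (eq_big_nat _ _ (F2 := fun i => ((i%:R)%:E * difquot_sup I psi i)%E)) // => i iI.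
have /andP[_ iI'] := iI.
by rewrite density_sup_eq_difquot_sup //; [exact: dphi_gt0 | exact: phi_gt0].
Qed.

End DensityAndPrimitive.

Unset Implicit Arguments.

Theorem lemma6p5 (R : realType) (I : nat) (hI : (0 < I)%N)
  (rho : nat -> R -> R)
  (rho_cont : forall i, (1 <= i <= I)%N -> {within @Rplus R, continuous (rho i)})
  (rho_ge0 : forall i, (1 <= i <= I)%N -> forall u, 0 <= u -> 0 <= rho i u)
  (psi : nat -> R -> R)
  (psi_def : forall i u, (1 <= i <= I)%N -> 0 <= u ->
     psi i u = Rintegral lebesgue_measure `[0, u] (rho i)) :
  inDdensity I rho <-> inD2 I psi.
Proof.
have psi0 i : (1 <= i <= I)%N -> psi i 0 = 0.
  by move=> iI; rewrite psi_def // set_itv1 Rintegral_set1.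
have psi_is_derive i : (1 <= i <= I)%N -> is_derive 0 (1:R) (ext0 (psi i)) (rho i 0) ->
    forall x, is_derive x (1:R) (ext0 (psi i)) (ext0 (rho i) x).
  by move=> iI; exact: ext0_integral_is_derive (rho_cont i iI) (fun u => psi_def i u iI).
split=> [dens|d2].
  apply: (inD2_of_inDdensity rho_ge0 psi0 _ dens) => i iI; apply: psi_is_derive => //.
  apply: ext0_integral_is_derive0 (fun u => psi_def i u iI) _.
  exact: Cq_R_continuous (dens.1 i iI).2.
apply: (inDdensity_of_inD2 rho_ge0 psi0 _ d2) => i iI; apply: psi_is_derive => //.
have [P' [P'' _]] := (d2.2 i iI).2.
apply: ext0_integral_is_derive0_of_C1 (rho_cont i iI) (fun u => psi_def i u iI) (P' 0) _.
exact: derivable_continuous.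
Qed.
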